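(* Let $S$ be the set obtained after $i-1$ iterations of BLITS (calling the SIEVE subroutine), and let $O \in \arg\max_{|S'|\le k} f(S')$. Then $\mathbb{E}[f(O\cup S)] \ge (1-1/r)^{i-1}\,\texttt{OPT}$.
   Context: $N$ is a ground set with $|N|=n$, $f:2^N\to\mathbb{R}_{\ge0}$ is non-negative submodular (not necessarily monotone), $k$ is a cardinality constraint, $\texttt{OPT}=\max_{|S|\le k} f(S)$. $f_S(T) = f(S\cup T)-f(S)$, $f_S(a) = f_S(\{a\})$. A dummy element $a$ satisfies $f_S(a)=0$ for all $S$. $\mathcal{U}(X)$ is the uniform distribution over subsets of $X$ of size exactly $k/r$, and $\Delta(a,S,X) := \mathbb{E}_{R\sim\mathcal{U}(X)}[f_{S\cup(R\setminus\{a\})}(a)]$. SIEVE$(S,k,i,r)$ (idealized, with parameter $\epsilon>0$, exact $\texttt{OPT}$ and exact expectations): $X\leftarrow N$, $t \leftarrow \frac{1-\epsilon/2}{2}((1-1/r)^{i-1}(1-\epsilon/2)\texttt{OPT} - f(S))$; while $|X|>k$: $X^+\leftarrow\{a\in X:\Delta(a,S,X)\ge0\}$; if $\mathbb{E}_{R\sim\mathcal{U}(X)}[f_S(R\cap X^+)]\ge t/r$ return $R\cap X^+$ with $R\sim\mathcal{U}(X)$; else $X\leftarrow\{a\in X:\Delta(a,S,X)\ge(1+\epsilon/4)t/k\}$. After the loop: add $k-|X|$ dummy elements to $X$, set $X^+\leftarrow\{a\in X:\Delta(a,S,X)\ge0\}$, return $R\cap X^+$ with $R\sim\mathcal{U}(X)$.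 BLITS with parameter $r$: $S\leftarrow\emptyset$; for $i=1,\dots,r$, $S\leftarrow S\cup$ SIEVE$(S,k,i,r)$; return $S$. *)

(* Idealized BLITS / SIEVE as an exact finite distribution. *)
From mathcomp Require Import all_boot all_order all_algebra.
Set Implicit Arguments. Unset Strict Implicit. Unset Printing Implicit Defensive.
Import Order.TTheory GRing.Theory Num.Theory.
Local Open Scope ring_scope.

Section Blits.
Context {R : realFieldType} {N : finType}.

Definition submodular (f : {set N} -> R) : Prop :=
  forall A B : {set N}, f (A :|: B) + f (A :&: B) <= f A + f B.

Definition usets (T : finType) (X : {set T}) (m : nat) : {set {set T}} :=
  [set A : {set T} | (A \subset X) && (#|A| == m)].

Definition avg_sets (T : finType) (X : {set T}) (m : nat) (g : {set T} -> R) : R :=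
  (\sum_(A in usets X m) g A) / #|usets X m|%:R.

(* A finite sub-distribution on outcomes; [None] = the run does not terminate. *)
Definition dist := seq (R * option {set N}).

Definition uniform_dist (T : finType) (X : {set T}) (m : nat) (h : {set T} -> {set N})
  : dist := [seq ((#|usets X m|%:R)^-1, Some (h A)) | A <- enum (usets X m)].

Definition Delta (T : finType) (fT : {set T} -> R) (m : nat) (a : T) (S X : {set T}) : R :=
  avg_sets X m (fun A => fT (a |: (S :|: (A :\ a))) - fT (S :|: (A :\ a))).

Variables (f : {set N} -> R) (k r : nat) (eps : R).

Definition OPT : R := \big[Num.max/f set0]_(A : {set N} | (#|A| <= k)%N) f A.

(* ground set extended with k dummy elements (inr j); f ignores dummies *)
Definition ext_f (A : {set (N + 'I_k)%type}) : R := f (inl @^-1: A).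

Definition threshold (S : {set N}) (i : nat) : R :=
  (1 - eps / 2) / 2 * ((1 - (r%:R)^-1) ^+ i.-1 * (1 - eps / 2) * OPT - f S).

(* after the while loop: pad X with k - |X| dummies, sample, drop dummies *)
Definition sieve_final (S X : {set N}) : dist :=
  let X' := (inl @: X) :|: [set (@inr N 'I_k j) | j : 'I_k & (j < k - #|X|)%N] in
  let S' := inl @: S in
  let Xp := [set a in X' | 0 <= Delta ext_f (k %/ r) a S' X'] in
  uniform_dist X' (k %/ r) (fun A => inl @^-1: (A :&: Xp)).

(* the while loop; [fuel] is never exhausted (X strictly shrinks, fuel = n+2);
   if the filter does not change X the loop would run forever: outcome None *)
Fixpoint sieve_loop (S : {set N}) (i fuel : nat) (X : {set N}) : dist :=
  match fuel with
  | 0 => [:: (1, None)]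
  | fuel'.+1 =>
    if (k < #|X|)%N then
      let t := threshold S i in
      let Xp := [set a in X | 0 <= Delta f (k %/ r) a S X] in
      if t / r%:R <= avg_sets X (k %/ r) (fun A => f (S :|: (A :&: Xp)) - f S)
      then uniform_dist X (k %/ r) (fun A => A :&: Xp)
      else
        let X' := [set a in X | (1 + eps / 4) * t / k%:R <= Delta f (k %/ r) a S X] in
        if X' == X then [:: (1, None)] else sieve_loop S i fuel' X'
    else sieve_final S X
  end.

Definition sieve (S : {set N}) (i : nat) : dist := sieve_loop S i #|N|.+2 [set: N].

(* distribution of S after m further iterations of BLITS, the next one being
   iteration i, starting from the current set S *)
Fixpoint blits_run (m i : nat) (S : {set N}) : dist :=
  match m with
  | 0 => [:: (1, Some S)]
  | m'.+1 =>
    flatten [seq (let: (w, o) := p in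
                  match o with
                  | None => [:: (w, None)]
                  | Some T => [seq (w * q.1, q.2) | q <- blits_run m' i.+1 (S :|: T)]
                  end) | p <- sieve S i]
  end.

End Blits.

Definition expect {R : realFieldType} {N : finType} (d : @dist R N) (g : {set N} -> R) : R :=
  \sum_(p <- d) p.1 * (if p.2 is Some A then g A else 0).

Definition diverge_prob {R : realFieldType} {N : finType} (d : @dist R N) : R :=
  \sum_(p <- d) (if p.2 is None then p.1 else 0).

From mathcomp Require Import all_boot all_order all_algebra.
From mathcomp Require Import ring lra zify.
Set Implicit Arguments. Unset Strict Implicit. Unset Printing Implicit Defensive.
Import Order.TTheory GRing.Theory Num.Theory.
Local Open Scope ring_scope.

(* Each SIEVE call outputs a uniformly random (k/r)-subset of a set of at least k
   elements, intersected with a fixed set, so every element lies in its output with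
   probability at most 1/r.  For a non-negative submodular g and a random set A that
   contains each element with probability at most p, E[g(A)] >= (1 - p) g(∅)
   (Buchbinder, Feldman, Naor and Schwartz).  Applied to g(T) = f(O ∪ S ∪ T), this
   shows that each iteration of BLITS keeps at least a (1 - 1/r) fraction of
   E[f(O ∪ S)], which starts at f(O) >= OPT; non-terminating runs have probability
   zero and are discarded. *)

Lemma invn_le1 (R : numFieldType) (r : nat) : (r%:R : R)^-1 <= 1.
Proof. by case: r => [|r]; rewrite ?invr0 ?ler01 // invf_le1 ?ler1n ?ltr0n. Qed.

Lemma submodular_setU (R : realFieldType) (N : finType) (f : {set N} -> R) B :
  submodular f -> submodular (fun T => f (B :|: T)).
Proof. by move=> subf S T; rewrite setUUr setUIr; apply: subf. Qed.

Lemma OPT_le (R : realFieldType) (N : finType) (f : {set N} -> R) k y :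
  (forall A : {set N}, (#|A| <= k)%N -> f A <= y) -> OPT f k <= y.
Proof.
move=> fy; apply: (big_ind (fun x => x <= y)) => //; first by apply: fy; rewrite cards0.
by move=> x z xy zy; rewrite ge_max xy zy.
Qed.

Section Distributions.
Context {R : realFieldType} {N : finType}.
Implicit Types (d : @dist R N) (g h : {set N} -> R).

Definition dist_nonneg d := all (fun p : R * option {set N} => 0 <= p.1) d.
Definition mass d := expect d (fun=> 1).
Definition incl_prob d (b : N) := expect d (fun A => (b \in A)%:R).

Lemma eq_expect d g1 g2 : g1 =1 g2 -> expect d g1 = expect d g2.
Proof. by move=> eq_g; apply: eq_bigr => -[w [A|]] _ //=; rewrite eq_g. Qed.

Lemma expectD d g1 g2 : expect d (fun A => g1 A + g2 A) = expect d g1 + expect d g2.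
Proof. by rewrite /expect -big_split; apply: eq_bigr => -[w [A|]] _ /=; ring. Qed.

Lemma expectZ d c g : expect d (fun A => c * g A) = c * expect d g.
Proof. by rewrite /expect mulr_sumr; apply: eq_bigr => -[w [A|]] _ /=; ring. Qed.

Lemma expect_cst d c : expect d (fun=> c) = mass d * c.
Proof. by rewrite mulrC -expectZ; apply: eq_expect => A; rewrite mulr1. Qed.

Lemma ler_expect d g1 g2 : dist_nonneg d -> (forall A, g1 A <= g2 A) ->
  expect d g1 <= expect d g2.
Proof.
move=> /allP d_ge0 le_g; rewrite /expect !big_seq; apply: ler_sum => -[w [A|]] /d_ge0 //= w_ge0.
exact: ler_wpM2l.
Qed.

Lemma expect_ge0 d g : dist_nonneg d -> (forall A, 0 <= g A) -> 0 <= expect d g.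
Proof. by move=> d_ge0 g_ge0; rewrite -(mulr0 (mass d)) -expect_cst; apply: ler_expect. Qed.

Lemma incl_prob_ge0 d b : dist_nonneg d -> 0 <= incl_prob d b.
Proof. by move=> d_ge0; apply: expect_ge0 => // A; rewrite ler0n. Qed.

Lemma diverge_prob_ge0 d : dist_nonneg d -> 0 <= diverge_prob d.
Proof.
move=> /allP d_ge0; rewrite /diverge_prob big_seq.
by apply: sumr_ge0 => -[w [A|]] // /d_ge0.
Qed.

Lemma ler_expect_ae d h g1 g2 : dist_nonneg d -> (forall A, 0 <= h A) -> expect d h = 0 ->
  (forall A, h A = 0 -> g1 A <= g2 A) -> expect d g1 <= expect d g2.
Proof.
move=> /allP d_ge0 h_ge0 /eqP; rewrite /expect big_seq_cond psumr_eq0; last first.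
  by move=> -[w [A|]] /andP[/d_ge0 /= w_ge0 _] //=; rewrite mulr_ge0.
move=> /allP h0 le_g; rewrite !big_seq; apply: ler_sum => -[w [A|]] pd //=.
have := h0 _ pd; rewrite pd /= mulf_eq0 => /orP[/eqP-> | /eqP/le_g]; first by rewrite !mul0r.
by apply: ler_wpM2l; apply: d_ge0 pd.
Qed.

Definition dist_bind d (K : {set N} -> @dist R N) : @dist R N :=
  flatten [seq (let: (w, o) := p in
                match o with
                | None => [:: (w, None)]
                | Some T => [seq (w * q.1, q.2) | q <- K T]
                end) | p <- d].

Lemma dist_bind_nonneg d K : dist_nonneg d -> (forall T, dist_nonneg (K T)) ->
  dist_nonneg (dist_bind d K).
Proof.
move=> /allP d_ge0 K_ge0; apply/allP => q /flattenP[_ /mapP[[w [T|]] /d_ge0 /= w_ge0 ->]].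
  by case/mapP=> q' /(allP (K_ge0 T)) q'_ge0 ->; rewrite mulr_ge0.
by rewrite inE => /eqP->.
Qed.

Lemma expect_bind d K g : expect (dist_bind d K) g = expect d (fun T => expect (K T) g).
Proof.
rewrite /expect big_flatten big_map; apply: eq_bigr => -[w [T|]] _ /=.
  by rewrite big_map mulr_sumr; apply: eq_bigr => q _; rewrite mulrA.
by rewrite big_seq1 /= mulr0.
Qed.

Lemma diverge_bind d K : diverge_prob (dist_bind d K) =
  diverge_prob d + expect d (fun T => diverge_prob (K T)).
Proof.
rewrite /diverge_prob /expect big_flatten big_map -big_split; apply: eq_bigr => -[w [T|]] _ /=.
  by rewrite add0r big_map mulr_sumr; apply: eq_bigr => -[v [A|]] _ /=; rewrite ?mulr0.
by rewrite big_seq1 mulr0 addr0.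
Qed.
End Distributions.

Section SubmodularSampling.
Context {R : realFieldType} {N : finType}.
Variables (g : {set N} -> R) (d : @dist R N).
Hypotheses (g_sub : submodular g) (g_ge0 : forall A, 0 <= g A) (d_ge0 : dist_nonneg d).

Lemma submodular_setI_D1 (U : {set N}) a : a \in U -> forall A,
  g (A :&: (U :\ a)) + (g U - g (U :\ a)) * (a \in A)%:R <= g (A :&: U).
Proof.
move=> aU A; have [aA | aNA] /= := boolP (a \in A); last first.
  suff -> : A :&: (U :\ a) = A :&: U by rewrite mulr0 addr0.
  by apply/setP => x; rewrite !inE; case: eqP => // ->; rewrite (negPf aNA).
have := g_sub (A :&: U) (U :\ a).
have -> : A :&: U :|: U :\ a = U.
  apply/setP => x; rewrite !inE; case: eqP => [->|_]; rewrite ?aA ?aU //=.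
  by case: (x \in A); case: (x \in U).
have -> : A :&: U :&: (U :\ a) = A :&: (U :\ a).
  by apply/setP => x; rewrite !inE; case: (x \in A); case: (x \in U); rewrite ?andbF.
lra.
Qed.

(* Induction on [U], peeling off the element of [U] least likely to be sampled. *)
Lemma expect_submodular_setI_ge (U : {set N}) c p : c <= p ->
  (forall a, a \in U -> c <= incl_prob d a <= p) ->
  (mass d - p) * g set0 + c * g U <= expect d (fun A => g (A :&: U)).
Proof.
elim: {U}#|U| {-2}U c (erefl #|U|) => [|n IH] U c cardU cp bounds.
  move/cards0_eq: cardU => ->.
  rewrite (eq_expect d (g2 := fun=> g set0)) => [|A]; last by rewrite setI0.
  have : 0 <= (p - c) * g set0 by rewrite mulr_ge0 ?subr_ge0.
  rewrite expect_cst; lra.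
have [a0 a0U] : exists a0, a0 \in U by apply/card_gt0P; rewrite cardU.
have [a aU a_min] : exists2 a, a \in U & forall b, b \in U -> incl_prob d a <= incl_prob d b.
  by case: (arg_minP (incl_prob d) a0U) => a; exists a.
have cardUa : #|U :\ a| = n by move: cardU; rewrite (cardsD1 a) aU => -[].
have /andP[ca ap] := bounds a aU.
have boundsUa : forall b, b \in U :\ a -> incl_prob d a <= incl_prob d b <= p.
  by move=> b /setD1P[_ bU]; rewrite a_min //; case/andP: (bounds b bU).
have := IH (U :\ a) (incl_prob d a) cardUa ap boundsUa.
have := ler_expect d_ge0 (submodular_setI_D1 aU); rewrite expectD expectZ -/(incl_prob d a).
have : c * g U <= incl_prob d a * g U by rewrite ler_wpM2r.
lra.
Qed.

Lemma expect_submodular_ge p : 0 <= p -> (forall a, incl_prob d a <= p) ->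
  (mass d - p) * g set0 <= expect d g.
Proof.
move=> p_ge0 le_p; have := @expect_submodular_setI_ge setT 0 p p_ge0.
rewrite mul0r addr0 (eq_expect d (g2 := g)) => [|A]; last by rewrite setIT.
by apply=> a _; rewrite incl_prob_ge0 ?le_p.
Qed.
End SubmodularSampling.

Section UniformSubsets.
Context {T : finType}.

Lemma card_usets_mem (X : {set T}) m t : t \in X ->
  (#|usets X m :&: [set A : {set T} | t \in A]| * #|X| = m * #|usets X m|)%N.
Proof.
move=> tX.
have usets_notin : usets X m :\: [set A : {set T} | t \in A] = usets (X :\ t) m.
  by apply/setP => A; rewrite !inE subsetD1 andbCA andbA.
have := cardsID [set A : {set T} | t \in A] (usets X m).
rewrite usets_notin /usets !cards_draws (cardsD1 t X) tX add1n => {usets_notin}.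
move: #|_ :&: _| => c; case: m => [|m]; first by rewrite !bin0; lia.
rewrite -(mul_bin_diag #|X :\ t|.+1) binS /= => /eqP; rewrite addnC eqn_add2l => /eqP ->.
exact: mulnC.
Qed.

Lemma card_usets_mem_le (X : {set T}) m t r : (r * m <= #|X|)%N ->
  (#|usets X m :&: [set A : {set T} | t \in A]| * r <= #|usets X m|)%N.
Proof.
move=> le_rm; have [tX | tNX] := boolP (t \in X); last first.
  suff -> : usets X m :&: [set A : {set T} | t \in A] = set0 by rewrite cards0.
  apply/setP => A; rewrite !inE; apply/negP => /andP[/andP[/subsetP AX _] /AX].
  exact/negP.
have X_gt0 : (0 < #|X|)%N by apply/card_gt0P; exists t.
have := card_usets_mem m tX; rewrite -(leq_pmul2r X_gt0); nia.
Qed.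
End UniformSubsets.

Section UniformDist.
Context {R : realFieldType} {N T : finType}.
Variables (X : {set T}) (m : nat) (h : {set T} -> {set N}).
Local Notation unif := (@uniform_dist R N T X m h).

Lemma expect_uniform_dist g : expect unif g =
  (#|usets X m|%:R)^-1 * \sum_(A in usets X m) g (h A).
Proof. by rewrite /expect /uniform_dist big_map big_enum mulr_sumr. Qed.

Lemma uniform_dist_nonneg : dist_nonneg unif.
Proof. by apply/allP => _ /mapP[A _ ->]; rewrite /= invr_ge0 ler0n. Qed.

Lemma diverge_uniform_dist : diverge_prob unif = 0.
Proof. by rewrite /diverge_prob big_map big1. Qed.

Lemma mass_uniform_dist : (m <= #|X|)%N -> mass unif = 1.
Proof.
move=> le_mX; rewrite /mass expect_uniform_dist sumr_const mulr_natr -mulr_natr mulVf //.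
by rewrite pnatr_eq0 -lt0n /usets cards_draws bin_gt0.
Qed.

Lemma incl_prob_uniform_dist_le r b t : (0 < r)%N -> (r * m <= #|X|)%N ->
  (forall A, b \in h A -> t \in A) -> incl_prob unif b <= (r%:R)^-1.
Proof.
move=> r_gt0 le_rm bt.
have U_gt0 : (0 < #|usets X m|)%N.
  by rewrite /usets cards_draws bin_gt0 (leq_trans _ le_rm) // leq_pmull.
rewrite /incl_prob expect_uniform_dist.
apply: (@le_trans _ _ ((#|usets X m|%:R)^-1 * #|usets X m :&: [set A : {set T} | t \in A]|%:R)).
  rewrite ler_wpM2l ?invr_ge0 ?ler0n // -sum1_card natr_sum.
  rewrite (eq_bigl (fun A => (A \in usets X m) && (t \in A))) => [|A]; last by rewrite !inE.
  rewrite big_mkcondr /=; apply: ler_sum => A _.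
  by case: ifP => [_|tA]; case: (boolP (b \in h A)) => // /bt; rewrite tA.
rewrite mulrC ler_pdivrMr ?ltr0n // mulrC ler_pdivlMr ?ltr0n // -natrM ler_nat.
exact: card_usets_mem_le.
Qed.
End UniformDist.

Definition incl_bounded {R : realFieldType} {N : finType} (d : @dist R N) (p : R) :=
  [/\ dist_nonneg d, mass d + diverge_prob d = 1 & forall b, incl_prob d b <= p].

Lemma incl_bounded_diverge {R : realFieldType} {N : finType} (p : R) :
  0 <= p -> incl_bounded ([:: (1, None)] : @dist R N) p.
Proof.
move=> p_ge0; split=> [|| b]; rewrite /dist_nonneg /mass /incl_prob /expect /diverge_prob.
- by rewrite /= ler01.
- by rewrite !big_seq1 /= mulr0 add0r.
- by rewrite big_seq1 /= mulr0.
Qed.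

Lemma uniform_dist_incl_bounded {R : realFieldType} {N T : finType} (X : {set T}) m
    (h : {set T} -> {set N}) (tb : N -> T) r :
  (0 < r)%N -> (r * m <= #|X|)%N -> (forall b A, b \in h A -> tb b \in A) ->
  incl_bounded (uniform_dist X m h : @dist R N) (r%:R)^-1.
Proof.
move=> r_gt0 le_rm htb; split=> [|| b].
- exact: uniform_dist_nonneg.
- by rewrite diverge_uniform_dist addr0 mass_uniform_dist // (leq_trans _ le_rm) ?leq_pmull.
- exact: (incl_prob_uniform_dist_le r_gt0 le_rm (htb b)).
Qed.

Lemma card_ord_ltn k c : (c <= k)%N -> #|[set j : 'I_k | (j < c)%N]| = c.
Proof.
move=> le_ck; rewrite cardsE -sum1_card (big_ord_narrow le_ck).
by rewrite sum1_card card_ord.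
Qed.

Section Blits.
Context {R : realFieldType} {N : finType}.
Variables (f : {set N} -> R) (k r : nat) (eps : R) (O : {set N}).
Hypotheses (f_ge0 : forall A, 0 <= f A) (f_sub : submodular f).
Hypotheses (r_gt0 : (0 < r)%N) (r_dvd_k : (r %| k)%N).

Lemma card_sieve_pad (X : {set N}) : (#|X| <= k)%N ->
  #|inl @: X :|: [set (@inr N 'I_k j) | j : 'I_k & (j < k - #|X|)%N]| = k.
Proof.
move=> le_Xk; rewrite cardsU card_imset; last by move=> a b [].
rewrite card_imset; last by move=> a b [].
rewrite card_ord_ltn ?leq_subr //.
suff -> : inl @: X :&: [set inr j | j : 'I_k & (j < k - #|X|)%N] = set0 by rewrite cards0; lia.
by apply/setP => x; rewrite !inE; apply/negP => /andP[/imsetP[a _ ->] /imsetP[j _]].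
Qed.

Lemma sieve_loop_incl_bounded S i fuel X :
  incl_bounded (sieve_loop f k r eps S i fuel X) (r%:R)^-1.
Proof.
have r_m : (r * (k %/ r))%N = k by rewrite mulnC divnK.
have r_inv_ge0 : 0 <= (r%:R : R)^-1 by rewrite invr_ge0 ler0n.
elim: fuel X => [|fuel IH] X /=; first exact: incl_bounded_diverge r_inv_ge0.
case: ifP => lt_kX.
  case: ifP => _; last by case: ifP => _; [exact: incl_bounded_diverge r_inv_ge0 | exact: IH].
  apply: (uniform_dist_incl_bounded (tb := id)) => //; first by rewrite r_m ltnW.
  by move=> b A; rewrite inE => /andP[].
apply: (uniform_dist_incl_bounded (tb := inl)) => //.
  by rewrite r_m card_sieve_pad // leqNgt lt_kX.
by move=> b A; rewrite !inE => /andP[].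
Qed.

Lemma sieve_incl_bounded S i : incl_bounded (sieve f k r eps S i) (r%:R)^-1.
Proof. exact: sieve_loop_incl_bounded. Qed.

Lemma blits_runS m i S : blits_run f k r eps m.+1 i S =
  dist_bind (sieve f k r eps S i) (fun T => blits_run f k r eps m i.+1 (S :|: T)).
Proof. by []. Qed.

Lemma blits_run_nonneg m i S : dist_nonneg (blits_run f k r eps m i S).
Proof.
elim: m i S => [|m IH] i S; first by rewrite /dist_nonneg /= ler01.
have [sieve_ge0 _ _] := sieve_incl_bounded S i.
by rewrite blits_runS; apply: dist_bind_nonneg.
Qed.

Lemma blits_run_ge m i S : diverge_prob (blits_run f k r eps m i S) = 0 ->
  (1 - (r%:R)^-1) ^+ m * f (O :|: S)
    <= expect (blits_run f k r eps m i S) (fun T => f (O :|: T)).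
Proof.
elim: m i S => [|m IH] i S.
  by rewrite /expect big_seq1 /= expr0 !mul1r.
set d := sieve f k r eps S i; set K := fun T => blits_run f k r eps m i.+1 (S :|: T).
have [d_ge0 d_total d_incl] := sieve_incl_bounded S i.
have KD_ge0 T : 0 <= diverge_prob (K T) by apply/diverge_prob_ge0/blits_run_nonneg.
rewrite blits_runS -/d -/K expect_bind diverge_bind => /eqP.
rewrite paddr_eq0 ?diverge_prob_ge0 ?expect_ge0 // => /andP[/eqP d_div0 /eqP K_div0].
have d_mass : mass d = 1 by rewrite -d_total d_div0 addr0.
rewrite exprSr -mulrA.
apply: le_trans (ler_expect_ae d_ge0 KD_ge0 K_div0 (fun T KT_div0 => IH i.+1 _ KT_div0)).
rewrite expectZ ler_wpM2l ?exprn_ge0 ?subr_ge0 ?invn_le1 //.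
under eq_expect do rewrite setUA.
have := expect_submodular_ge (submodular_setU (O :|: S) f_sub) (fun A => f_ge0 _) d_ge0.
by rewrite d_mass setU0; apply; rewrite ?invr_ge0.
Qed.
End Blits.

Theorem lemma4 (R : realFieldType) (N : finType) (f : {set N} -> R)
  (k r : nat) (eps : R) (i : nat) (O : {set N}) :
  (forall A : {set N}, 0 <= f A) ->
  submodular f ->
  (0 < k)%N -> (0 < r)%N -> (r %| k)%N -> 0 < eps ->
  (1 <= i <= r)%N ->
  (#|O| <= k)%N -> (forall A : {set N}, (#|A| <= k)%N -> f A <= f O) ->
  diverge_prob (blits_run f k r eps i.-1 1 set0) = 0 ->
  (1 - (r%:R)^-1) ^+ i.-1 * OPT f k
    <= expect (blits_run f k r eps i.-1 1 set0) (fun S => f (O :|: S)).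
Proof.
move=> f_ge0 f_sub _ r_gt0 r_dvd_k _ _ _ O_max no_div.
apply: le_trans (blits_run_ge O f_ge0 f_sub r_gt0 r_dvd_k no_div).
by rewrite setU0 ler_wpM2l ?OPT_le ?exprn_ge0 ?subr_ge0 ?invn_le1.
Qed.
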